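(* Let $J\in\mathbb{R}^{m\times n}$ have full column rank, let $H\in\mathbb{R}^{m\times m}$ be symmetric positive definite, $q\in\mathbb{R}^m$, $c\in\mathbb{R}$, and consider minimizing $L(\theta)=\mathcal{L}(J\theta)$ with $\mathcal{L}(v)=\tfrac12 v^\top Hv+v^\top q+c$. Assume consistency: $J\theta^*=\arg\min_v\mathcal{L}(v)$ for some $\theta^*$. Let $\tilde H=(J^\top J)^{-1/2}J^\top HJ(J^\top J)^{-1/2}$. Then natural gradient descent with regularization $\lambda=0$ and step size $\eta=1/\lambda_{\max}(\tilde H)$, namely $$\theta_{t+1}=\theta_t-\eta\,(J^\top J)^{-1}J^\top(HJ\theta_t+q),$$ satisfies for all $t\ge0$ $$\|\theta_t-\theta^*\|_{J^\top J}\le\big(1-\kappa^{-1}(\tilde H)\big)^t\|\theta_0-\theta^*\|_{J^\top J}.$$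
   Context: $\|x\|_{A}=\sqrt{x^\top Ax}$ and $\kappa(\tilde H)=\lambda_{\max}(\tilde H)/\lambda_{\min}(\tilde H)$. *)

From HB Require Import structures.
From mathcomp Require Import all_boot all_order all_algebra.
Set Implicit Arguments. Unset Strict Implicit. Unset Printing Implicit Defensive.
Import Order.TTheory GRing.Theory Num.Theory.
Local Open Scope ring_scope.

Section Defs.
Variable R : rcfType.

Definition spd (k : nat) (A : 'M[R]_k) : Prop :=
  A^T = A /\ forall x : 'cV[R]_k, x != 0 -> 0 < (x^T *m A *m x) 0 0.

Definition mnorm (k : nat) (A : 'M[R]_k) (x : 'cV[R]_k) : R :=
  Num.sqrt ((x^T *m A *m x) 0 0).

Definition quadL (m : nat) (H : 'M[R]_m) (q : 'cV[R]_m) (c : R) (v : 'cV[R]_m) : R :=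
  2^-1 * (v^T *m H *m v) 0 0 + (v^T *m q) 0 0 + c.

Fixpoint ngd (m n : nat) (J : 'M[R]_(m, n)) (H : 'M[R]_m) (q : 'cV[R]_m)
    (eta : R) (theta0 : 'cV[R]_n) (t : nat) : 'cV[R]_n :=
  match t with
  | 0 => theta0
  | t'.+1 =>
      let th := ngd J H q eta theta0 t' in
      th - eta *: (invmx (J^T *m J) *m J^T *m (H *m J *m th + q))
  end.

Definition is_lambda_max (k : nat) (A : 'M[R]_k) (l : R) : Prop :=
  eigenvalue A l /\ forall b, eigenvalue A b -> b <= l.
Definition is_lambda_min (k : nat) (A : 'M[R]_k) (l : R) : Prop :=
  eigenvalue A l /\ forall b, eigenvalue A b -> l <= b.

End Defs.

From HB Require Import structures.
From mathcomp Require Import all_boot all_order all_algebra.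
From mathcomp Require Import complex spectral sesquilinear ring lra.
Set Implicit Arguments. Unset Strict Implicit. Unset Printing Implicit Defensive.
Import Order.TTheory GRing.Theory Num.Theory.
Local Open Scope ring_scope.

(* Write G = J^T J, K = J^T H J and e_t = theta_t - theta*.  Optimality of
   J theta* for the strictly convex loss gives H J theta* + q = 0, hence
   e_(t+1) = (1 - eta G^-1 K) e_t.  In the coordinates e = S y with
   S = G^(-1/2), the G-norm becomes the Euclidean norm and the iteration
   matrix becomes 1 - H~ / lmax, a symmetric matrix whose spectrum lies in
   [0, 1 - lmin / lmax]; by the spectral theorem (applied over R[i]) its
   operator norm is at most 1 - lmin / lmax. *)

Section PosDef.
Variable R : rcfType.

Definition posdefmx n (A : 'M[R]_n) : Prop :=
  forall x : 'cV[R]_n, x != 0 -> 0 < (x^T *m A *m x) 0 0.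

Lemma cV_normsq_gt0 n (x : 'cV[R]_n) : x != 0 -> 0 < (x^T *m x) 0 0.
Proof.
move=> x0; have sqE : (x^T *m x) 0 0 = \sum_i x i 0 ^+ 2.
  by rewrite mxE; apply: eq_bigr => i _; rewrite !mxE expr2.
have sq_ge0 i : 0 <= x i 0 ^+ 2 by exact: sqr_ge0.
rewrite sqE lt_def psumr_eq0 ?sumr_ge0 // andbT.
apply: contra x0 => /allP x_0; apply/eqP/matrixP => i j.
rewrite ord1 mxE; apply/eqP; rewrite -sqrf_eq0.
by rewrite (implyP (x_0 i _)) ?mem_index_enum.
Qed.

Lemma posdefmx1 n : posdefmx (1%:M : 'M[R]_n).
Proof. by move=> x; rewrite mulmx1; exact: cV_normsq_gt0. Qed.

Lemma posdefmx_congr m n (A : 'M[R]_m) (B : 'M[R]_(m, n)) :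
  \rank B = n -> posdefmx A -> posdefmx (B^T *m A *m B).
Proof.
move=> rkB Apd x x0; rewrite !mulmxA -trmx_mul -!mulmxA mulmxA; apply: Apd.
have BTfree : row_free B^T by rewrite /row_free mxrank_tr rkB.
apply: contra x0 => Bx0.
by rewrite -trmx_eq0 -(mulmx_free_eq0 _ BTfree) -trmx_mul trmx_eq0.
Qed.

Lemma posdefmx_unit n (A : 'M[R]_n) : posdefmx A -> A \in unitmx.
Proof.
move=> Apd; rewrite -row_free_unit -kermx_eq0; apply/eqP/row_matrixP => i.
rewrite row0; apply/eqP; apply: contraT => ki0.
have kiT0 : (row i (kermx A))^T != 0 by rewrite trmx_eq0.
by have := Apd _ kiT0; rewrite trmxK -row_mul mulmx_ker row0 mul0mx mxE ltxx.
Qed.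

Lemma posdefmx_eigenvalue_gt0 n (A : 'M[R]_n) a :
  posdefmx A -> eigenvalue A a -> 0 < a.
Proof.
move=> Apd /eigenvalueP [v vA v0].
have vT0 : v^T != 0 by rewrite trmx_eq0.
have := Apd _ vT0; rewrite trmxK vA -scalemxAl mxE.
by rewrite pmulr_lgt0 //; have := cV_normsq_gt0 vT0; rewrite trmxK.
Qed.

End PosDef.

Section NormalMatrix.
Variable C : numClosedFieldType.
Local Open Scope sesquilinear_scope.

Lemma cV_normsqE n (z : 'cV[C]_n) : (z^t* *m z) 0 0 = \sum_i `|z i 0| ^+ 2.
Proof. by rewrite mxE; apply: eq_bigr => i _; rewrite !mxE normCKC. Qed.

Lemma unitarymx_normsq n (P : 'M[C]_n) (z : 'cV[C]_n) :
  P \is unitarymx -> ((P *m z)^t* *m (P *m z)) 0 0 = (z^t* *m z) 0 0.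
Proof.
move=> Punitary; rewrite trmx_mul map_mxM mulmxA -(mulmxA _ _ P).
by rewrite -invmx_unitary // mulVmx ?unitarymx_unit // mulmx1.
Qed.

Lemma eigenvalue_spectral_diag n (A : 'M[C]_n) i :
  A \is normalmx -> eigenvalue A (spectral_diag A 0 i).
Proof.
move=> /orthomx_spectralP Adec.
set P := spectralmx A in Adec *; set d := spectral_diag A in Adec *.
apply/eigenvalueP; exists (row i P).
  rewrite Adec !mulmxA -!row_mul mulmxV ?spectral_unit // mul1mx.
  by rewrite row_mul row_diag_mx -scalemxAl -rowE.
rewrite rowE mulmx_free_eq0 ?row_free_unit ?spectral_unit //.
by apply/negP => /eqP/matrixP/(_ 0 i)/eqP; rewrite !mxE !eqxx oner_eq0.
Qed.

Lemma normalmx_normsq_le n (A : 'M[C]_n) (r : C) (z : 'cV[C]_n) :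
  A \is normalmx -> (forall i, `|spectral_diag A 0 i| <= r) ->
  ((A *m z)^t* *m (A *m z)) 0 0 <= r ^+ 2 * (z^t* *m z) 0 0.
Proof.
move=> /orthomx_spectralP Adec dr.
set P := spectralmx A; set d := spectral_diag A.
have Punitary : P \is unitarymx by exact: spectral_unitarymx.
have -> : A *m z = P^t* *m (diag_mx d *m (P *m z)).
  by rewrite {1}Adec invmx_unitary // !mulmxA.
rewrite unitarymx_normsq ?trmxC_unitary // -(unitarymx_normsq z Punitary).
rewrite !cV_normsqE mulr_sumr; apply: ler_sum => i _.
rewrite mul_diag_mx mxE normrM exprMn; apply: ler_wpM2r; first exact: exprn_ge0.
by rewrite lerXn2r ?nnegrE ?(le_trans _ (dr i)).
Qed.

End NormalMatrix.

Section RealSymmetric.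
Variable R : rcfType.
Local Notation toC := (real_complex R).
Local Open Scope sesquilinear_scope.

Lemma eigenvalue_map_real_complex n (M : 'M[R]_n) k :
  eigenvalue (map_mx toC M) (toC k) = eigenvalue M k.
Proof. by rewrite !eigenvalue_root_char -map_char_poly fmorph_root. Qed.

Lemma map_real_complex_trmxC m n (M : 'M[R]_(m, n)) :
  (map_mx toC M)^t* = map_mx toC M^T.
Proof.
apply/matrixP => i j; rewrite !mxE conj_Creal //.
by apply/complex_realP; exists (M j i).
Qed.

Lemma symmx_normsq_le n (N : 'M[R]_n) (r : R) (y : 'cV[R]_n) :
  N^T = N -> (forall mu, eigenvalue N mu -> `|mu| <= r) ->
  ((N *m y)^T *m (N *m y)) 0 0 <= r ^+ 2 * (y^T *m y) 0 0.
Proof.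
move=> NT Nr; set A := map_mx toC N.
have Aherm : A \is hermsymmx.
  apply: realsym_hermsym.
    by apply/is_hermitianmxP; rewrite expr0 scale1r map_mx_id // /A map_trmx NT.
  by apply/mxOverP => i j; rewrite mxE; apply/complex_realP; exists (N i j).
have Anormal := hermitian_normalmx Aherm.
have dr i : `|spectral_diag A 0 i| <= toC r.
  have /complex_realP [k dk] := mxOverP (hermitian_spectral_diag_real Aherm) 0 i.
  have := eigenvalue_spectral_diag i Anormal.
  rewrite dk eigenvalue_map_real_complex => /Nr.
  rewrite ler_norml real_ler_norml; last by apply/complex_realP; exists k.
  by rewrite -rmorphN !lecR.
have := normalmx_normsq_le (map_mx toC y) Anormal dr.
rewrite -map_mxM !map_real_complex_trmxC -!map_mxM !mxE.
by rewrite -rmorphXn -rmorphM lecR.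
Qed.

End RealSymmetric.

Section Richardson.
Variable R : rcfType.

Lemma eigenvalue_shift_scale n (M : 'M[R]_n) (c mu : R) :
  c != 0 -> eigenvalue (1%:M - c *: M) mu -> eigenvalue M ((1 - mu) / c).
Proof.
move=> c0 /eigenvalueP [v vE v0]; apply/eigenvalueP; exists v => //.
move: vE; rewrite mulmxBr mulmx1 -scalemxAr => vM.
by rewrite mulrC -scalerA scalerBl scale1r -vM subKr scalerA mulVf // scale1r.
Qed.

Lemma richardson_normsq_le n (M : 'M[R]_n) (a l : R) (y : 'cV[R]_n) :
  M^T = M -> 0 < l -> (forall b, eigenvalue M b -> a <= b <= l) ->
  (((1%:M - l^-1 *: M) *m y)^T *m ((1%:M - l^-1 *: M) *m y)) 0 0
    <= (1 - a / l) ^+ 2 * (y^T *m y) 0 0.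
Proof.
move=> MT l0 Mb; apply: symmx_normsq_le.
  by rewrite linearB /= trmx1 linearZ /= MT.
move=> mu /(eigenvalue_shift_scale (invr_neq0 (lt0r_neq0 l0))).
rewrite invrK => /Mb /andP [amu mul].
have -> : 1 - a / l = (l - a) / l by field; rewrite lt0r_neq0.
rewrite ger0_norm; last by nra.
by rewrite ler_pdivlMr //; nra.
Qed.

End Richardson.

Section Preconditioned.
Variable R : rcfType.

Lemma mnorm_mulmx n (G S : 'M[R]_n) (y : 'cV[R]_n) :
  mnorm G (S *m y) = mnorm (S^T *m G *m S) y.
Proof. by rewrite /mnorm trmx_mul !mulmxA. Qed.

Lemma unitmx_sqrt_invmx n (G S : 'M[R]_n) :
  G \in unitmx -> S *m S = invmx G -> S \in unitmx.
Proof.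
by move=> Gu SS; have := unitmx_inv G; rewrite Gu -SS unitmx_mul => /andP[].
Qed.

Lemma preconditioned_step_le n (G K S : 'M[R]_n) (a l : R) (e : 'cV[R]_n) :
  G \in unitmx -> S^T = S -> S *m S = invmx G -> K^T = K ->
  0 < l -> a <= l -> (forall b, eigenvalue (S *m K *m S) b -> a <= b <= l) ->
  mnorm G ((1%:M - l^-1 *: (invmx G *m K)) *m e) <= (1 - a / l) * mnorm G e.
Proof.
move=> Gu ST SS KT l0 al Mb.
have Su := unitmx_sqrt_invmx Gu SS.
have SGS : S^T *m G *m S = 1%:M.
  rewrite ST -[S *m G](mulKmx Su) (mulmxA S S G) SS mulVmx // mulmx1.
  exact: mulVmx.
have -> : e = S *m (invmx S *m e) by rewrite mulKVmx.
move: (invmx S *m e) => y.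
have -> : (1%:M - l^-1 *: (invmx G *m K)) *m (S *m y)
    = S *m ((1%:M - l^-1 *: (S *m K *m S)) *m y).
  by rewrite !mulmxBl !mulmxBr !mul1mx -!scalemxAl -!scalemxAr -SS !mulmxA.
have MT : (S *m K *m S)^T = S *m K *m S by rewrite !trmx_mul ST KT mulmxA.
rewrite !(mnorm_mulmx G S) SGS /mnorm !mulmx1.
apply: le_trans (ler_wsqrtr (richardson_normsq_le y MT l0 Mb)) _.
by rewrite sqrtrM ?sqr_ge0 // sqrtr_sqr ger0_norm // subr_ge0 ler_pdivrMr ?mul1r.
Qed.

End Preconditioned.

Section QuadraticLoss.
Variable R : rcfType.

Lemma quadLD m (H : 'M[R]_m) q c (v w : 'cV[R]_m) : H^T = H ->
  quadL H q c (v + w) =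
  quadL H q c v + (w^T *m (H *m v + q)) 0 0 + 2^-1 * (w^T *m H *m w) 0 0.
Proof.
move=> HT; rewrite /quadL.
have vHw : v^T *m H *m w = (w^T *m H *m v)^T.
  by rewrite !trmx_mul trmxK HT mulmxA.
rewrite [(v + w)^T]raddfD !mulmxDl !mulmxDr vHw.
rewrite ![((_ + _ : 'M[R]_1) 0 0)]mxE [((_^T : 'M[R]_1) 0 0)]mxE mulmxA.
by field.
Qed.

Lemma quadL_min_grad_eq0 m (H : 'M[R]_m) q c v0 :
  H^T = H -> posdefmx H -> (forall v, quadL H q c v0 <= quadL H q c v) ->
  H *m v0 + q = 0.
Proof.
move=> HT Hpd v0_min; set g := H *m v0 + q; apply: contraTeq isT => g0.
have a0 : 0 < (g^T *m g) 0 0 := cV_normsq_gt0 g0.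
have b0 : 0 < (g^T *m H *m g) 0 0 := Hpd g g0.
set a := (g^T *m g) 0 0 in a0; set b := (g^T *m H *m g) 0 0 in b0.
(* Stepping from v0 by -(a/b) g lowers the loss by a^2/(2b). *)
have := v0_min (v0 + (- (a / b)) *: g); rewrite quadLD // -/g.
rewrite !linearZ /= -!scalemxAl ![((_ *: _ : 'M[R]_1) 0 0)]mxE -/a -/b.
have decrease :
    - (a / b) * a + 2^-1 * (- (a / b) * (- (a / b) * b)) = - (a * a / (2 * b)).
  by field; rewrite gt_eqF.
have : 0 < a * a / (2 * b) by rewrite divr_gt0 ?mulr_gt0.
lra.
Qed.

End QuadraticLoss.

Lemma ngd_error_succ (R : rcfType) m n (J : 'M[R]_(m, n)) (H : 'M[R]_m)
    (q : 'cV[R]_m) (eta : R) (theta0 thstar : 'cV[R]_n) (t : nat) :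
  H *m J *m thstar + q = 0 ->
  ngd J H q eta theta0 t.+1 - thstar =
  (1%:M - eta *: (invmx (J^T *m J) *m (J^T *m H *m J)))
    *m (ngd J H q eta theta0 t - thstar).
Proof.
move=> grad0 /=; set th := ngd J H q eta theta0 t.
have -> : q = - (H *m J *m thstar) by apply/eqP; rewrite -addr_eq0 addrC grad0.
by rewrite -mulmxBr mulmxBl mul1mx -scalemxAl !mulmxA addrAC.
Qed.

Theorem proposition3 (R : rcfType) (m n : nat)
    (J : 'M[R]_(m, n)) (H : 'M[R]_m) (q : 'cV[R]_m) (c : R)
    (thstar : 'cV[R]_n) (S : 'M[R]_n) (lmax lmin : R) (theta0 : 'cV[R]_n) :
  \rank J = n ->
  spd H ->
  (forall v : 'cV[R]_m, quadL H q c (J *m thstar) <= quadL H q c v) ->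
  spd S -> S *m S = invmx (J^T *m J) ->
  is_lambda_max (S *m J^T *m H *m J *m S) lmax ->
  is_lambda_min (S *m J^T *m H *m J *m S) lmin ->
  forall t : nat,
    mnorm (J^T *m J) (ngd J H q (lmax^-1) theta0 t - thstar)
      <= (1 - (lmax / lmin)^-1) ^+ t * mnorm (J^T *m J) (theta0 - thstar).
Proof.
move=> rkJ [HT Hpd] thstar_min [ST _] SS [lmaxE lmaxB] [lminE lminB] t.
have Gunit : J^T *m J \in unitmx.
  apply: posdefmx_unit.
  by have := posdefmx_congr rkJ (@posdefmx1 R m); rewrite mulmx1.
have Mpd : posdefmx (S *m J^T *m H *m J *m S).
  have Su := unitmx_sqrt_invmx Gunit SS.
  have := posdefmx_congr (mxrank_unit Su) (posdefmx_congr rkJ Hpd).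
  by rewrite ST !mulmxA.
have lmax_gt0 := posdefmx_eigenvalue_gt0 Mpd lmaxE.
have grad0 : H *m J *m thstar + q = 0.
  by rewrite -mulmxA; exact: quadL_min_grad_eq0 thstar_min.
have KT : (J^T *m H *m J)^T = J^T *m H *m J by rewrite !trmx_mul trmxK HT mulmxA.
have spectrum b : eigenvalue (S *m (J^T *m H *m J) *m S) b -> lmin <= b <= lmax.
  by rewrite !mulmxA => Eb; rewrite lminB ?lmaxB.
rewrite invf_div; elim: t => [|t IH]; first by rewrite expr0 mul1r.
have step :=
  preconditioned_step_le _ Gunit ST SS KT lmax_gt0 (lmaxB _ lminE) spectrum.
rewrite ngd_error_succ //; apply: le_trans (step _) _.
by rewrite exprS -mulrA ler_wpM2l // subr_ge0 ler_pdivrMr // mul1r lmaxB.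
Qed.
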